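(* Let $R$ be a ring, $S$ an Ore set of $R$, and $\mathfrak{a}=\mathrm{ass}_R(S)$. Let $\mathfrak{a}_l=\mathrm{ass}_l(S)$, $\pi_l:R\to R_l:=R/\mathfrak{a}_l$; $\mathfrak{a}_r=\mathrm{ass}_r(S)$, $\pi_r:R\to R_r:=R/\mathfrak{a}_r$ (natural maps). Then \begin{enumerate} \item $\mathfrak{a}_l+\mathfrak{a}_r\subseteq\mathfrak{a}$. \item $S_l:=\pi_l(S)\in\mathrm{Den}'_r(R_l,\mathfrak{a}/\mathfrak{a}_l)$ and $R_lS_l^{-1}\simeq S^{-1}R\simeq RS^{-1}$, $R$-isomorphisms. \item $S_r:=\pi_r(S)\in{}'\mathrm{Den}_l(R_r,\mathfrak{a}/\mathfrak{a}_r)$ and $S_r^{-1}R_r\simeq S^{-1}R\simeq RS^{-1}\simeq R_lS_l^{-1}$, $R$-isomorphisms. \item ${}'\mathfrak{a}(S)=\mathfrak{a}_r$ and $\mathfrak{a}'(S)=\mathfrak{a}_l$. \end{enumerate}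
   Context: Rings are associative with $1$. Multiplicative set: $SS\subseteq S$, $1\in S$, $0\notin S$. Ore set: $Sr\cap Rs\ne\emptyset$ and $rS\cap sR\neq\emptyset$ for all $r\in R,s\in S$. $\mathrm{ass}_l(S)=\{r: sr=0\text{ for some } s\in S\}$, $\mathrm{ass}_r(S)=\{r: rs=0\text{ for some } s\in S\}$. $R\langle S^{-1}\rangle=R\langle X_S\rangle/I_S$ ($R\langle X_S\rangle$ freely generated by $R$ and noncommuting $x_s$; $I_S$ generated by $sx_s-1,x_ss-1$); $\mathrm{ass}_R(S)=\ker(R\to R\langle S^{-1}\rangle)$; here $S^{-1}R$ and $RS^{-1}$ both denote $R\langle S^{-1}\rangle$. Left/right denominator sets: a left Ore set $T$ with $rt=0\Rightarrow t'r=0$ for some $t,t'\in T$, and symmetrically; $T^{-1}A$, $AT^{-1}$ are Ore localizations. For a ring $A$: ${}'\mathcal{C}_A=\{r: xr=0\Rightarrow x=0\}$, $\mathcal{C}'_A=\{r:rx=0\Rightarrow x=0\}$. ${}'\mathrm{Den}_l(A,\mathfrak{c})=\{T \text{ left denominator set of } A: \mathrm{ass}_l(T)=\mathfrak{c},\ T\subseteq{}'\mathcal{C}_A\}$ and $\mathrm{Den}'_r(A,\mathfrak{c})=\{T\text{ right denominator set}:\mathrm{ass}_r(T)=\mathfrak{c},\ T\subseteq\mathcal{C}'_A\}$. ${}'\mathfrak{a}(S)$ (resp. $\mathfrak{a}'(S)$) is the least ideal $\mathfrak{b}$ of $R$ such that the image of $S$ in $R/\mathfrak{b}$ lies in ${}'\mathcal{C}_{R/\mathfrak{b}}$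 (resp. $\mathcal{C}'_{R/\mathfrak{b}}$). *)

From HB Require Import structures.
From mathcomp Require Import all_boot all_algebra.
Set Implicit Arguments. Unset Strict Implicit. Unset Printing Implicit Defensive.
Import GRing.Theory.
Local Open Scope ring_scope.

Definition subs (T : Type) := T -> Prop.

Definition image_of (A B : Type) (f : A -> B) (X : subs A) : subs B :=
  fun y => exists x, X x /\ f x = y.

Definition same_set (T : Type) (X Y : subs T) : Prop := forall x, X x <-> Y x.

Definition is_invertible (A : pzRingType) (a : A) : Prop :=
  exists b : A, a * b = 1 /\ b * a = 1.

Definition mult_set (A : pzRingType) (S : subs A) : Prop :=
  S 1 /\ ~ S 0 /\ (forall a b, S a -> S b -> S (a * b)).

Definition left_ore (A : pzRingType) (S : subs A) : Prop :=
  forall (r s : A), S s -> exists s' r', S s' /\ s' * r = r' * s.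
Definition right_ore (A : pzRingType) (S : subs A) : Prop :=
  forall (r s : A), S s -> exists s' r', S s' /\ r * s' = s * r'.

Definition ore_set (A : pzRingType) (S : subs A) : Prop :=
  mult_set S /\ left_ore S /\ right_ore S.

Definition ass_l (A : pzRingType) (S : subs A) : subs A :=
  fun r => exists s, S s /\ s * r = 0.
Definition ass_r (A : pzRingType) (S : subs A) : subs A :=
  fun r => exists s, S s /\ r * s = 0.

Definition left_denom (A : pzRingType) (T : subs A) : Prop :=
  mult_set T /\ left_ore T /\
  (forall r t, T t -> r * t = 0 -> exists t', T t' /\ t' * r = 0).
Definition right_denom (A : pzRingType) (T : subs A) : Prop :=
  mult_set T /\ right_ore T /\
  (forall r t, T t -> t * r = 0 -> exists t', T t' /\ r * t' = 0).

Definition lC (A : pzRingType) (r : A) : Prop := forall x, x * r = 0 -> x = 0.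
Definition rC (A : pzRingType) (r : A) : Prop := forall x, r * x = 0 -> x = 0.

(* T ∈ 'Den_l(A, c) and T ∈ Den'_r(A, c) *)
Definition in_Den_l' (A : pzRingType) (T : subs A) (c : subs A) : Prop :=
  left_denom T /\ same_set (ass_l T) c /\ (forall t, T t -> lC t).
Definition in_Den_r' (A : pzRingType) (T : subs A) (c : subs A) : Prop :=
  right_denom T /\ same_set (ass_r T) c /\ (forall t, T t -> rC t).

(* (L, phi) is the universal localization R<S^{-1}> = R<X_S>/I_S of R at S,
   characterized (up to unique R-isomorphism) by its universal property:
   phi(S) consists of units and every ring map R -> B inverting S factors
   uniquely through phi. *)
Definition is_univ_loc (R : pzRingType) (S : subs R) (L : pzRingType)
    (phi : {rmorphism R -> L}) : Prop :=
  (forall s, S s -> is_invertible (phi s)) /\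
  forall (B : pzRingType) (f : {rmorphism R -> B}),
    (forall s, S s -> is_invertible (f s)) ->
    exists g : {rmorphism L -> B},
      (forall r, g (phi r) = f r) /\
      (forall g' : {rmorphism L -> B}, (forall r, g' (phi r) = f r) ->
         forall x, g' x = g x).

Definition is_left_fractions (A : pzRingType) (T : subs A) (Q : pzRingType)
    (sigma : {rmorphism A -> Q}) : Prop :=
  (forall t, T t -> is_invertible (sigma t)) /\
  (forall q : Q, exists t a, T t /\ exists u, u * sigma t = 1 /\ sigma t * u = 1
                                     /\ q = u * sigma a) /\
  (forall a, sigma a = 0 <-> ass_l T a).
Definition is_right_fractions (A : pzRingType) (T : subs A) (Q : pzRingType)
    (sigma : {rmorphism A -> Q}) : Prop :=
  (forall t, T t -> is_invertible (sigma t)) /\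
  (forall q : Q, exists t a, T t /\ exists u, u * sigma t = 1 /\ sigma t * u = 1
                                     /\ q = sigma a * u) /\
  (forall a, sigma a = 0 <-> ass_r T a).

Definition R_iso (R L Q : pzRingType) (phi : R -> L) (psi : R -> Q) : Prop :=
  exists g : {rmorphism L -> Q}, bijective g /\ forall r, g (phi r) = psi r.

Definition is_ideal (R : pzRingType) (b : subs R) : Prop :=
  b 0 /\ (forall x y, b x -> b y -> b (x - y)) /\
  (forall r x, b x -> b (r * x)) /\ (forall r x, b x -> b (x * r)).

(* image of S in R/b lies in 'C_{R/b}, resp. C'_{R/b}, written out modulo b *)
Definition S_in_lC_mod (R : pzRingType) (S : subs R) (b : subs R) : Prop :=
  forall s x, S s -> b (x * s) -> b x.
Definition S_in_rC_mod (R : pzRingType) (S : subs R) (b : subs R) : Prop :=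
  forall s x, S s -> b (s * x) -> b x.

Definition least_ideal (R : pzRingType) (P : subs R -> Prop) (b : subs R) : Prop :=
  is_ideal b /\ P b /\ (forall c, is_ideal c -> P c -> forall x, b x -> c x).

(* The kernel of R -> S^-1 R is ass_lr S = {x | s' x s = 0 for some s, s' in S}.
   One inclusion holds in every ring inverting S.  For the other, the image of S in
   R / ass_r S is a left Ore set of regular elements, so the left fractions over
   R / ass_r S form a right R-module on which S acts bijectively; acting on it maps R
   into the ring of additive endomorphisms, inverts S, and kills only ass_lr S.
   Knowing the kernel, the images of S in R / ass_l S and R / ass_r S are denominator
   sets whose Ore localizations have the universal property of R<S^-1>, so all these
   rings are R-isomorphic. *)

From HB Require Import structures.
From mathcomp Require Import boolp.
From mathcomp Require Import all_boot all_algebra.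
Import GRing.Theory.
Local Open Scope ring_scope.
Local Open Scope quotient_scope.

Set Implicit Arguments. Unset Strict Implicit. Unset Printing Implicit Defensive.

Definition inverts (R B : pzRingType) (f : R -> B) (S : subs R) : Prop :=
  forall s, S s -> is_invertible (f s).

Definition ass_lr (R : pzRingType) (S : subs R) : subs R :=
  fun x => exists s s', [/\ S s, S s' & s' * x * s = 0].

Lemma lC_mulIr (A : pzRingType) (t x y : A) : lC t -> x * t = y * t -> x = y.
Proof. by move=> tC xy; apply/eqP; rewrite -subr_eq0; apply/eqP/tC; rewrite mulrBl xy subrr. Qed.

Section RightEndomorphisms.
Variable M : zmodType.

Definition add_morph (f : M -> M) := {morph f : x y / x + y}.
Definition rendo := sig add_morph.

HB.instance Definition _ := gen_eqMixin rendo.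
HB.instance Definition _ := gen_choiceMixin rendo.

Lemma rendoP (g h : rendo) : sval g =1 sval h -> g = h.
Proof. by case: g h => [g ?] [h ?] /funext /= gh; apply: eq_exist. Qed.

Fact add_morph0 : add_morph (fun=> 0).
Proof. by move=> m n; rewrite addr0. Qed.
Fact add_morphD (g h : rendo) : add_morph (fun m => sval g m + sval h m).
Proof. by move=> m n; rewrite (svalP g) (svalP h) addrACA. Qed.
Fact add_morphN (g : rendo) : add_morph (fun m => - sval g m).
Proof. by move=> m n; rewrite (svalP g) opprD. Qed.
Fact add_morph1 : add_morph id.
Proof. by []. Qed.
Fact add_morph_comp (g h : rendo) : add_morph (sval h \o sval g).
Proof. by move=> m n; rewrite /= (svalP g) (svalP h). Qed.

Definition rendo0 : rendo := exist _ _ add_morph0.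
Definition rendo_add (g h : rendo) : rendo := exist _ _ (add_morphD g h).
Definition rendo_opp (g : rendo) : rendo := exist _ _ (add_morphN g).
Definition rendo1 : rendo := exist _ _ add_morph1.
(* Reversed composition, so that a right action on M is a ring morphism into rendo. *)
Definition rendo_mul (g h : rendo) : rendo := exist _ _ (add_morph_comp g h).

Lemma rendo_addA : associative rendo_add.
Proof. by move=> ? ? ?; apply: rendoP => m /=; rewrite addrA. Qed.
Lemma rendo_addC : commutative rendo_add.
Proof. by move=> ? ?; apply: rendoP => m /=; rewrite addrC. Qed.
Lemma rendo_add0 : left_id rendo0 rendo_add.
Proof. by move=> ?; apply: rendoP => m /=; rewrite add0r. Qed.
Lemma rendo_addN : left_inverse rendo0 rendo_opp rendo_add.
Proof. by move=> ?; apply: rendoP => m /=; rewrite addNr. Qed.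
Lemma rendo_mulA : associative rendo_mul.
Proof. by move=> ? ? ?; apply: rendoP. Qed.
Lemma rendo_mul1 : left_id rendo1 rendo_mul.
Proof. by move=> ?; apply: rendoP. Qed.
Lemma rendo_mulr1 : right_id rendo1 rendo_mul.
Proof. by move=> ?; apply: rendoP. Qed.
Lemma rendo_mulDl : left_distributive rendo_mul rendo_add.
Proof. by move=> g1 g2 h; apply: rendoP => m /=; rewrite (svalP h). Qed.
Lemma rendo_mulDr : right_distributive rendo_mul rendo_add.
Proof. by move=> g h1 h2; apply: rendoP. Qed.

HB.instance Definition _ := GRing.isPzRing.Build rendo
  rendo_addA rendo_addC rendo_add0 rendo_addN
  rendo_mulA rendo_mul1 rendo_mulr1 rendo_mulDl rendo_mulDr.

End RightEndomorphisms.

Section LeftFractionModule.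
Variables (A : pzRingType) (T : subs A).
Hypotheses (T1 : T 1) (TM : forall a b, T a -> T b -> T (a * b))
  (Tore : left_ore T) (TlC : forall t, T t -> lC t).

(* The pair (t, a) stands for the left fraction t^-1 a. *)
Definition frac_equiv (x y : A * A) : Prop :=
  exists c c', T (c * x.1) /\ c * x.1 = c' * y.1 /\ c * x.2 = c' * y.2.

Lemma frac_equiv_refl x : T x.1 -> frac_equiv x x.
Proof. by move=> Tx; exists 1, 1; rewrite !mul1r. Qed.

Lemma frac_equiv_sym x y : frac_equiv x y -> frac_equiv y x.
Proof. by case=> c [c' [Tc [E1 E2]]]; exists c', c; rewrite -E1 -E2. Qed.

Lemma frac_equiv_trans x y z : T y.1 -> frac_equiv x y -> frac_equiv y z -> frac_equiv x z.
Proof.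
move=> Ty [c [c' [Tc [E1 E2]]]] [d [d' [Td [F1 F2]]]].
have [e [e' [Te Ee]]] := Tore (c * x.1) Td.
have ec' : e * c' = e' * d by apply: (lC_mulIr (TlC Ty)); rewrite -!mulrA -E1 Ee mulrA.
exists (e * c), (e' * d'); split; first by rewrite -mulrA; apply: TM.
by rewrite -!mulrA E1 E2 -F1 -F2 !mulrA ec'.
Qed.

Lemma frac_equiv_scale c t a : T (c * t) -> frac_equiv (t, a) (c * t, c * a).
Proof. by move=> Tct; exists c, 1; rewrite !mul1r. Qed.

Lemma frac_equiv_mulr u p t a b :
  frac_equiv (u, p) (t, a) -> frac_equiv (u, p * b) (t, a * b).
Proof. by case=> c [c' [Tc [E1 E2]]]; exists c, c'; rewrite /= !mulrA E2. Qed.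

Lemma frac_equiv_add u p q t a b : T u -> T t ->
  frac_equiv (u, p) (t, a) -> frac_equiv (u, q) (t, b) -> frac_equiv (u, p + q) (t, a + b).
Proof.
move=> Tu Tt [c [c' [Tc [E1 E2]]]] [d [d' [Td [F1 F2]]]]; rewrite /= in E1 E2 F1 F2 Tc Td.
have [e [e' [Te Ee]]] := Tore (c * u) Td.
have ec : e * c = e' * d by apply: (lC_mulIr (TlC Tu)); rewrite -!mulrA.
have ec' : e * c' = e' * d' by apply: (lC_mulIr (TlC Tt)); rewrite -!mulrA -E1 -F1.
exists (e * c), (e * c'); split; first by rewrite -mulrA; apply: TM.
by rewrite /= -!mulrA E1 !mulrDr E2 !mulrA ec ec' -!mulrA F2.
Qed.

Definition frac_pair := {x : A * A | `[< T x.1 >]}.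
Definition frac_rel : rel frac_pair := fun x y => `[< frac_equiv (val x) (val y) >].

Lemma frac_rel_equiv : equiv_class_of frac_rel.
Proof.
split=> [x | x y | y x z]; rewrite /frac_rel.
- by apply/asboolP/frac_equiv_refl; apply/asboolP; exact: (valP x).
- by apply/asboolP/asboolP => /frac_equiv_sym.
- move=> /asboolP xy /asboolP yz; apply/asboolP.
  exact: frac_equiv_trans (asboolP _ (valP y)) xy yz.
Qed.

Canonical frac_equiv_rel := EquivRelPack frac_rel_equiv.

Definition lfrac := {eq_quot frac_rel}.
HB.instance Definition _ := Choice.on lfrac.

Definition frac_pair0 : frac_pair := exist _ (1, 0) (asboolT T1).

(* Junk value: a pair whose denominator is not in T is sent to the class of 1^-1 0. *)
Definition frac (x : A * A) : lfrac := \pi_lfrac (insubd frac_pair0 x).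

Lemma frac_eqP x y : T x.1 -> T y.1 -> frac x = frac y <-> frac_equiv x y.
Proof.
move=> /asboolP Tx /asboolP Ty; rewrite /frac.
split=> [/eqquotP /asboolP | xy]; first by rewrite !insubdK.
by apply/eqquotP/asboolP; rewrite !insubdK.
Qed.

Definition rep (m : lfrac) : A * A := val (repr m).

Lemma rep_den m : T (rep m).1.
Proof. by apply/asboolP; exact: (valP (repr m)). Qed.

Lemma repK m : frac (rep m) = m.
Proof. by rewrite /frac /rep valKd reprK. Qed.

Lemma lfrac_ind (P : lfrac -> Prop) :
  (forall t a, T t -> P (frac (t, a))) -> forall m, P m.
Proof. by move=> Pfrac m; rewrite -(repK m) [rep m]surjective_pairing; apply/Pfrac/rep_den. Qed.

Lemma frac_scale c t a : T (c * t) -> T t -> frac (t, a) = frac (c * t, c * a).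
Proof. by move=> Tct Tt; apply/frac_eqP => //; apply: frac_equiv_scale. Qed.

Lemma frac_common2 m n : exists t a b, [/\ T t, m = frac (t, a) & n = frac (t, b)].
Proof.
elim/lfrac_ind: m => t a Tt; elim/lfrac_ind: n => u b Tu.
have [e [e' [Te Ee]]] := Tore t Tu; have Tet : T (e * t) by apply: TM.
exists (e * t), (e * a), (e' * b); split=> //; first exact: frac_scale.
by rewrite Ee; apply: frac_scale; rewrite -?Ee.
Qed.

Lemma frac_common3 m n p :
  exists t a b c, [/\ T t, m = frac (t, a), n = frac (t, b) & p = frac (t, c)].
Proof.
have [t [a [b [Tt -> ->]]]] := frac_common2 m n.
elim/lfrac_ind: p => u c Tu.
have [e [e' [Te Ee]]] := Tore t Tu; have Tet : T (e * t) by apply: TM.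
exists (e * t), (e * a), (e * b), (e' * c); split; rewrite // -?frac_scale //.
by rewrite Ee -frac_scale -?Ee.
Qed.

Definition lfrac_act (b : A) (m : lfrac) : lfrac := frac ((rep m).1, (rep m).2 * b).

Lemma lfrac_actE b t a : T t -> lfrac_act b (frac (t, a)) = frac (t, a * b).
Proof.
move=> Tt; have := repK (frac (t, a)); rewrite [rep _]surjective_pairing.
by move=> /frac_eqP -/(_ (rep_den _) Tt) /frac_equiv_mulr eq; apply/frac_eqP => //; apply: rep_den.
Qed.

Lemma lfrac_add_ex (m n : lfrac) :
  exists z : A * A, exists a b, [/\ T z.1, z.2 = a + b, m = frac (z.1, a) & n = frac (z.1, b)].
Proof. by have [t [a [b [Tt -> ->]]]] := frac_common2 m n; exists (t, a + b), a, b. Qed.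

Definition lfrac_add (m n : lfrac) : lfrac := frac (projT1 (cid (lfrac_add_ex m n))).

Lemma lfrac_addE t a b : T t -> lfrac_add (frac (t, a)) (frac (t, b)) = frac (t, a + b).
Proof.
move=> Tt; rewrite /lfrac_add; case: cid => [[u p] [a' [b' [/= Tu -> Ea Eb]]]].
move/esym: Ea => /frac_eqP -/(_ Tu Tt) Ea; move/esym: Eb => /frac_eqP -/(_ Tu Tt) Eb.
by apply/frac_eqP => //; apply: frac_equiv_add.
Qed.

Definition lfrac0 : lfrac := frac (1, 0).
Definition lfrac_opp : lfrac -> lfrac := lfrac_act (-1).

Lemma frac_num0 t : T t -> frac (t, 0) = lfrac0.
Proof. by move=> Tt; apply/frac_eqP => //; exists 1, t; rewrite !mul1r !mulr0 mulr1. Qed.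

Lemma lfrac_addA : associative lfrac_add.
Proof.
move=> m n p; have [t [a [b [c [Tt -> -> ->]]]]] := frac_common3 m n p.
by rewrite !lfrac_addE // addrA.
Qed.

Lemma lfrac_addC : commutative lfrac_add.
Proof.
by move=> m n; have [t [a [b [Tt -> ->]]]] := frac_common2 m n; rewrite !lfrac_addE // addrC.
Qed.

Lemma lfrac_add0 : left_id lfrac0 lfrac_add.
Proof. by elim/lfrac_ind=> t a Tt; rewrite -(frac_num0 Tt) lfrac_addE // add0r. Qed.

Lemma lfrac_addN : left_inverse lfrac0 lfrac_opp lfrac_add.
Proof.
by elim/lfrac_ind=> t a Tt; rewrite /lfrac_opp lfrac_actE // lfrac_addE // mulrN1 addNr frac_num0.
Qed.

HB.instance Definition _ := GRing.isZmodule.Build lfrac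
  lfrac_addA lfrac_addC lfrac_add0 lfrac_addN.

Lemma frac_add t a b : T t -> frac (t, a) + frac (t, b) = frac (t, a + b).
Proof. exact: lfrac_addE. Qed.

Lemma lfrac_actD b : add_morph (lfrac_act b).
Proof.
move=> m n; have [t [a [c [Tt -> ->]]]] := frac_common2 m n.
by rewrite frac_add // !lfrac_actE // frac_add // mulrDl.
Qed.

Lemma lfrac_actDr b1 b2 m : lfrac_act (b1 + b2) m = lfrac_act b1 m + lfrac_act b2 m.
Proof. by elim/lfrac_ind: m => t a Tt; rewrite !lfrac_actE // frac_add // mulrDr. Qed.

Lemma lfrac_act1 m : lfrac_act 1 m = m.
Proof. by elim/lfrac_ind: m => t a Tt; rewrite lfrac_actE // mulr1. Qed.

Lemma lfrac_actM b1 b2 m : lfrac_act (b1 * b2) m = lfrac_act b2 (lfrac_act b1 m).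
Proof. by elim/lfrac_ind: m => t a Tt; rewrite !lfrac_actE // mulrA. Qed.

Lemma lfrac_act_inj u : T u -> injective (lfrac_act u).
Proof.
move=> Tu m n; elim/lfrac_ind: m => t a Tt; elim/lfrac_ind: n => s b Ts.
rewrite !lfrac_actE // => /frac_eqP -/(_ Tt Ts) [c [c' [Tc [E1 E2]]]].
apply/frac_eqP => //; exists c, c'; split=> //; split=> //=.
by apply: (lC_mulIr (TlC Tu)); rewrite -!mulrA.
Qed.

Lemma lfrac_act_surj u : T u -> forall m, exists n, lfrac_act u n = m.
Proof.
move=> Tu; elim/lfrac_ind=> t a Tt; have [e [d [Te Ee]]] := Tore a Tu.
have Tet : T (e * t) by apply: TM.
by exists (frac (e * t, d)); rewrite lfrac_actE // -Ee -frac_scale.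
Qed.

Lemma lfrac_act_eq0 b : lfrac_act b (frac (1, 1)) = 0 -> ass_l T b.
Proof.
rewrite lfrac_actE // mul1r => /frac_eqP -/(_ T1 T1) [c [c' [/= Tc [E1 E2]]]].
by exists c; move: Tc E2; rewrite /= mulr1 mulr0.
Qed.

Definition lfrac_rendo (b : A) : rendo lfrac := exist _ _ (lfrac_actD b).

Fact lfrac_rendo_is_zmod_morphism : zmod_morphism lfrac_rendo.
Proof.
move=> b1 b2; apply: rendoP => m /=; apply: (addIr (lfrac_act b2 m)).
by rewrite -lfrac_actDr subrK addrNK.
Qed.

Fact lfrac_rendo_is_monoid_morphism : monoid_morphism lfrac_rendo.
Proof. by split=> [|b1 b2]; apply: rendoP => m /=; rewrite ?lfrac_act1 ?lfrac_actM. Qed.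

Lemma lfrac_rendo_invertible u : T u -> is_invertible (lfrac_rendo u).
Proof.
move=> Tu; have [g gK] := choice (lfrac_act_surj Tu).
have gD : add_morph g by move=> m n; apply: (lfrac_act_inj Tu); rewrite lfrac_actD !gK.
exists (exist _ _ gD); split; apply: rendoP => m /=; last exact: gK.
by apply: (lfrac_act_inj Tu); rewrite gK.
Qed.

Lemma left_ore_regular_localizing_rmorph :
  exists (B : pzRingType) (f : {rmorphism A -> B}), inverts f T /\ forall a, f a = 0 -> ass_l T a.
Proof.
pose f : {rmorphism A -> rendo lfrac} := HB.pack lfrac_rendo
  (GRing.isZmodMorphism.Build _ _ _ lfrac_rendo_is_zmod_morphism)
  (GRing.isMonoidMorphism.Build _ _ _ lfrac_rendo_is_monoid_morphism).
exists (rendo lfrac), f; split; first exact: lfrac_rendo_invertible.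
by move=> a /(congr1 (fun g : rendo lfrac => sval g (frac (1, 1)))); apply: lfrac_act_eq0.
Qed.

End LeftFractionModule.

Lemma invertible_mulIr (B : pzRingType) (y a b : B) : is_invertible y -> a * y = b * y -> a = b.
Proof. by case=> u [yu _] ab; rewrite -[a]mulr1 -[b]mulr1 -yu !mulrA ab. Qed.

Lemma invertible_mulrI (B : pzRingType) (y a b : B) : is_invertible y -> y * a = y * b -> a = b.
Proof. by case=> u [_ uy] ab; rewrite -[a]mul1r -[b]mul1r -uy -!mulrA ab. Qed.

Section AssLR.
Variables (R : pzRingType) (S : subs R).

Lemma ass_l_sub_ass_lr x : S 1 -> ass_l S x -> ass_lr S x.
Proof. by move=> S1 [s [Ss sx]]; exists 1, s; rewrite mulr1. Qed.

Lemma ass_r_sub_ass_lr x : S 1 -> ass_r S x -> ass_lr S x.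
Proof. by move=> S1 [s [Ss xs]]; exists s, 1; rewrite mul1r. Qed.

Lemma inverts_ass_lr_eq0 (B : pzRingType) (f : {rmorphism R -> B}) x :
  inverts f S -> ass_lr S x -> f x = 0.
Proof.
move=> fS [s [s' [Ss Ss' sxs]]].
have fxs : f (x * s) = 0.
  by apply: (invertible_mulrI (fS _ Ss')); rewrite -rmorphM mulrA sxs !rmorph0 mulr0.
by apply: (invertible_mulIr (fS _ Ss)); rewrite -rmorphM fxs mul0r.
Qed.

Lemma ker_ass_lr_rmorph_eq (Q B : pzRingType) (F : {rmorphism R -> Q})
    (f : {rmorphism R -> B}) x y :
  (forall z, F z = 0 -> ass_lr S z) -> inverts f S -> F x = F y -> f x = f y.
Proof.
move=> Fker fS Fxy; apply/eqP; rewrite -subr_eq0 -rmorphB; apply/eqP.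
by apply/(inverts_ass_lr_eq0 fS)/Fker; rewrite rmorphB Fxy subrr.
Qed.

End AssLR.

Lemma rmorph_invertible (R B : pzRingType) (f : {rmorphism R -> B}) x :
  is_invertible x -> is_invertible (f x).
Proof. by case=> y [xy yx]; exists (f y); rewrite -!rmorphM xy yx rmorph1. Qed.

Lemma univ_loc_R_iso (R L Q : pzRingType) (S : subs R)
    (phi : {rmorphism R -> L}) (psi : {rmorphism R -> Q}) :
  is_univ_loc S phi -> is_univ_loc S psi -> R_iso phi psi.
Proof.
move=> [phiS phiU] [psiS psiU].
have [g [gphi _]] := phiU Q psi psiS; have [k [kpsi _]] := psiU L phi phiS.
have [? [_ phi_uniq]] := phiU L phi phiS; have [? [_ psi_uniq]] := psiU Q psi psiS.
exists g; split=> //; exists k => x.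
  have kg : forall r, (k \o g) (phi r) = phi r by move=> r /=; rewrite gphi kpsi.
  by rewrite -[k (g x)]/((k \o g) x) (phi_uniq _ kg) -(phi_uniq idfun).
have gk : forall r, (g \o k) (psi r) = psi r by move=> r /=; rewrite kpsi gphi.
by rewrite -[g (k x)]/((g \o k) x) (psi_uniq _ gk) -(psi_uniq idfun).
Qed.

Section RightFractionsUniv.
Variables (R Q : pzRingType) (S : subs R) (F : {rmorphism R -> Q}).
Hypotheses (S1 : S 1) (SM : forall a b, S a -> S b -> S (a * b)) (SR : right_ore S)
  (FS : inverts F S) (Ffrac : forall q, exists s r, S s /\ q * F s = F r)
  (Fker : forall x, F x = 0 -> ass_lr S x).

Lemma right_fractions_rmorph_eq (B : pzRingType) (g1 g2 : {rmorphism Q -> B}) :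
  (forall r, g1 (F r) = g2 (F r)) -> g1 =1 g2.
Proof.
move=> g12 q; have [s [r [Ss qs]]] := Ffrac q.
apply: (invertible_mulIr (rmorph_invertible g1 (FS Ss))).
by rewrite -rmorphM qs g12 g12 -rmorphM qs.
Qed.

Section Lift.
Variables (B : pzRingType) (f : {rmorphism R -> B}).
Hypothesis fS : inverts f S.

Definition right_lift_spec (q : Q) (y : B) : Prop :=
  forall s r, S s -> q * F s = F r -> y * f s = f r.

Lemma right_lift_spec_ex q : exists y, right_lift_spec q y.
Proof.
have [s0 [r0 [Ss0 qs0]]] := Ffrac q; have [u0 [_ u0s0]] := fS Ss0.
exists (f r0 * u0) => s r Ss qs; have [c [d [Sc scd]]] := SR s Ss0.
have Frc : F (r * c) = F (r0 * d) by rewrite !rmorphM -qs -qs0 -!mulrA -!rmorphM scd.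
apply: (invertible_mulIr (fS Sc)).
rewrite -mulrA -rmorphM scd rmorphM mulrA -(mulrA (f r0)) u0s0 mulr1 -!rmorphM.
exact/esym/(ker_ass_lr_rmorph_eq Fker fS).
Qed.

Definition right_lift (q : Q) : B := projT1 (choice right_lift_spec_ex) q.

Lemma right_liftP q : right_lift_spec q (right_lift q).
Proof. exact: (projT2 (choice right_lift_spec_ex)). Qed.

Lemma right_liftE q s r y : S s -> q * F s = F r -> y * f s = f r -> right_lift q = y.
Proof.
move=> Ss qs ys; apply: (invertible_mulIr (fS Ss)); rewrite ys; exact: right_liftP.
Qed.

Fact right_lift_is_zmod_morphism : zmod_morphism right_lift.
Proof.
move=> q1 q2; have [s1 [r1 [Ss1 E1]]] := Ffrac q1; have [s2 [r2 [Ss2 E2]]] := Ffrac q2.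
have [c [d [Sc scd]]] := SR s1 Ss2; have Ss : S (s1 * c) by apply: SM.
have F1 : q1 * F (s1 * c) = F (r1 * c) by rewrite !rmorphM mulrA E1.
have F2 : q2 * F (s1 * c) = F (r2 * d) by rewrite scd !rmorphM mulrA E2.
apply: (right_liftE (r := r1 * c - r2 * d) Ss); first by rewrite mulrBl F1 F2 rmorphB.
by rewrite mulrBl rmorphB (right_liftP Ss F1) (right_liftP Ss F2).
Qed.

Fact right_lift_is_monoid_morphism : monoid_morphism right_lift.
Proof.
split=> [|q1 q2]; first by apply: (right_liftE (s := 1) (r := 1)); rewrite ?mul1r.
have [s1 [r1 [Ss1 E1]]] := Ffrac q1; have [s2 [r2 [Ss2 E2]]] := Ffrac q2.
have [c [d [Sc rcd]]] := SR r2 Ss1; have Ss : S (s2 * c) by apply: SM.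
apply: (right_liftE (r := r1 * d) Ss).
  by rewrite rmorphM -mulrA (mulrA q2) E2 -rmorphM rcd rmorphM mulrA E1 -rmorphM.
rewrite rmorphM -mulrA (mulrA (right_lift q2)) (right_liftP Ss2 E2) -rmorphM rcd.
by rewrite rmorphM mulrA (right_liftP Ss1 E1) -rmorphM.
Qed.

Lemma right_fractions_lift : exists g : {rmorphism Q -> B}, forall r, g (F r) = f r.
Proof.
pose g : {rmorphism Q -> B} := HB.pack right_lift
  (GRing.isZmodMorphism.Build _ _ _ right_lift_is_zmod_morphism)
  (GRing.isMonoidMorphism.Build _ _ _ right_lift_is_monoid_morphism).
exists g => r; apply: (right_liftE (s := 1)); rewrite ?rmorph1 ?mulr1 //=.
Qed.

End Lift.

Lemma right_fractions_univ_loc : is_univ_loc S F.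
Proof.
split=> // B f fS; have [g gF] := right_fractions_lift fS.
by exists g; split=> // g' g'F; apply: right_fractions_rmorph_eq => r; rewrite g'F gF.
Qed.

End RightFractionsUniv.

Section LeftFractionsUniv.
Variables (R Q : pzRingType) (S : subs R) (F : {rmorphism R -> Q}).
Hypotheses (S1 : S 1) (SM : forall a b, S a -> S b -> S (a * b)) (SL : left_ore S)
  (FS : inverts F S) (Ffrac : forall q, exists s r, S s /\ F s * q = F r)
  (Fker : forall x, F x = 0 -> ass_lr S x).

Lemma left_fractions_rmorph_eq (B : pzRingType) (g1 g2 : {rmorphism Q -> B}) :
  (forall r, g1 (F r) = g2 (F r)) -> g1 =1 g2.
Proof.
move=> g12 q; have [s [r [Ss sq]]] := Ffrac q.
apply: (invertible_mulrI (rmorph_invertible g1 (FS Ss))).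
by rewrite -rmorphM sq g12 g12 -rmorphM sq.
Qed.

Section Lift.
Variables (B : pzRingType) (f : {rmorphism R -> B}).
Hypothesis fS : inverts f S.

Definition left_lift_spec (q : Q) (y : B) : Prop :=
  forall s r, S s -> F s * q = F r -> f s * y = f r.

Lemma left_lift_spec_ex q : exists y, left_lift_spec q y.
Proof.
have [s0 [r0 [Ss0 s0q]]] := Ffrac q; have [u0 [s0u0 _]] := fS Ss0.
exists (u0 * f r0) => s r Ss sq; have [c [d [Sc csd]]] := SL s Ss0.
have Fcr : F (c * r) = F (d * r0) by rewrite !rmorphM -sq -s0q !mulrA -!rmorphM csd.
apply: (invertible_mulrI (fS Sc)).
rewrite mulrA -rmorphM csd rmorphM -mulrA (mulrA (f s0)) s0u0 mul1r -!rmorphM.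
exact/esym/(ker_ass_lr_rmorph_eq Fker fS).
Qed.

Definition left_lift (q : Q) : B := projT1 (choice left_lift_spec_ex) q.

Lemma left_liftP q : left_lift_spec q (left_lift q).
Proof. exact: (projT2 (choice left_lift_spec_ex)). Qed.

Lemma left_liftE q s r y : S s -> F s * q = F r -> f s * y = f r -> left_lift q = y.
Proof.
move=> Ss sq sy; apply: (invertible_mulrI (fS Ss)); rewrite sy; exact: left_liftP.
Qed.

Fact left_lift_is_zmod_morphism : zmod_morphism left_lift.
Proof.
move=> q1 q2; have [s1 [r1 [Ss1 E1]]] := Ffrac q1; have [s2 [r2 [Ss2 E2]]] := Ffrac q2.
have [c [d [Sc csd]]] := SL s1 Ss2; have Ss : S (c * s1) by apply: SM.
have F1 : F (c * s1) * q1 = F (c * r1) by rewrite !rmorphM -mulrA E1.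
have F2 : F (c * s1) * q2 = F (d * r2) by rewrite csd !rmorphM -mulrA E2.
apply: (left_liftE (r := c * r1 - d * r2) Ss); first by rewrite mulrBr F1 F2 rmorphB.
by rewrite mulrBr rmorphB (left_liftP Ss F1) (left_liftP Ss F2).
Qed.

Fact left_lift_is_monoid_morphism : monoid_morphism left_lift.
Proof.
split=> [|q1 q2]; first by apply: (left_liftE (s := 1) (r := 1)); rewrite ?mulr1.
have [s1 [r1 [Ss1 E1]]] := Ffrac q1; have [s2 [r2 [Ss2 E2]]] := Ffrac q2.
have [c [d [Sc crd]]] := SL r1 Ss2; have Ss : S (c * s1) by apply: SM.
apply: (left_liftE (r := d * r2) Ss).
  by rewrite rmorphM mulrA -(mulrA (F c)) E1 -rmorphM crd rmorphM -mulrA E2 -rmorphM.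
rewrite rmorphM mulrA -(mulrA (f c)) (left_liftP Ss1 E1) -rmorphM crd.
by rewrite rmorphM -mulrA (left_liftP Ss2 E2) -rmorphM.
Qed.

Lemma left_fractions_lift : exists g : {rmorphism Q -> B}, forall r, g (F r) = f r.
Proof.
pose g : {rmorphism Q -> B} := HB.pack left_lift
  (GRing.isZmodMorphism.Build _ _ _ left_lift_is_zmod_morphism)
  (GRing.isMonoidMorphism.Build _ _ _ left_lift_is_monoid_morphism).
by exists g => r; apply: (left_liftE (s := 1)); rewrite ?rmorph1 ?mul1r.
Qed.

End Lift.

Lemma left_fractions_univ_loc : is_univ_loc S F.
Proof.
split=> // B f fS; have [g gF] := left_fractions_lift fS.
by exists g; split=> // g' g'F; apply: left_fractions_rmorph_eq => r; rewrite g'F gF.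
Qed.

End LeftFractionsUniv.

Lemma lC_left_denom (A : pzRingType) (T : subs A) :
  mult_set T -> left_ore T -> (forall t, T t -> lC t) -> left_denom T.
Proof.
move=> Tmult Tore TlC; do 2!split=> //.
by move=> r t /TlC rt0 /rt0 ->; exists 1; rewrite mulr0; split=> //; apply: (proj1 Tmult).
Qed.

Lemma rC_right_denom (A : pzRingType) (T : subs A) :
  mult_set T -> right_ore T -> (forall t, T t -> rC t) -> right_denom T.
Proof.
move=> Tmult Tore TrC; do 2!split=> //.
by move=> r t /TrC tr0 /tr0 ->; exists 1; rewrite mul0r; split=> //; apply: (proj1 Tmult).
Qed.

Section Image.
Variables (R R' : pzRingType) (S : subs R) (pi : {rmorphism R -> R'}).
Hypothesis pi_surj : forall y, exists r, pi r = y.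

Lemma image_mult_set : mult_set S -> (forall s, S s -> pi s <> 0) -> mult_set (image_of pi S).
Proof.
move=> [S1 [_ SM]] piS0; split; first by exists 1; rewrite rmorph1.
split; first by case=> s [Ss /piS0].
by move=> _ _ [a [Sa <-]] [b [Sb <-]]; exists (a * b); rewrite rmorphM; split=> //; apply: SM.
Qed.

Lemma image_left_ore : left_ore S -> left_ore (image_of pi S).
Proof.
move=> SL y _ [s [Ss <-]]; have [r <-] := pi_surj y; have [c [d [Sc csd]]] := SL r s Ss.
by exists (pi c), (pi d); split; [exists c | rewrite -!rmorphM csd].
Qed.

Lemma image_right_ore : right_ore S -> right_ore (image_of pi S).
Proof.
move=> SR y _ [s [Ss <-]]; have [r <-] := pi_surj y; have [c [d [Sc rcs]]] := SR r s Ss.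
by exists (pi c), (pi d); split; [exists c | rewrite -!rmorphM rcs].
Qed.

End Image.

Section QuotientByAssR.
Variables (R Rr : pzRingType) (S : subs R) (pir : {rmorphism R -> Rr}).
Hypotheses (Smult : mult_set S) (SL : left_ore S) (pir_surj : forall y, exists r, pir r = y)
  (pir_ker : forall r, pir r = 0 <-> ass_r S r).

Let SM : forall a b, S a -> S b -> S (a * b) := proj2 (proj2 Smult).

Lemma quot_ass_r_lC t : image_of pir S t -> lC t.
Proof.
case=> s [Ss <-] y; have [x <-] := pir_surj y.
rewrite -rmorphM => /pir_ker [s' [Ss' xss']]; apply/pir_ker.
by exists (s * s'); rewrite mulrA; split=> //; apply: SM.
Qed.

Lemma quot_ass_r_mult_set : mult_set (image_of pir S).
Proof.
apply: image_mult_set => // s Ss /pir_ker [s' [Ss' ss']].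
by case: Smult => [_ [S0 _]]; apply: S0; rewrite -ss'; apply: SM.
Qed.

Lemma quot_ass_r_ass_l x : ass_l (image_of pir S) (pir x) <-> ass_lr S x.
Proof.
split=> [[_ [[s [Ss <-]]]] | [s [s' [Ss Ss' sxs]]]].
  by rewrite -rmorphM => /pir_ker [s' [Ss' sxs']]; exists s', s.
by exists (pir s'); split; [exists s' | rewrite -rmorphM; apply/pir_ker; exists s].
Qed.

Lemma univ_loc_ker_ass_lr (L : pzRingType) (phi : {rmorphism R -> L}) x :
  is_univ_loc S phi -> phi x = 0 -> ass_lr S x.
Proof.
move=> [_ phiU] phix; have [T1 [_ TM]] := quot_ass_r_mult_set.
have [B [f [fS fker]]] := left_ore_regular_localizing_rmorph
  T1 TM (image_left_ore pir_surj SL) quot_ass_r_lC.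
have [g [gphi _]] := phiU B (f \o pir) (fun s Ss => fS _ (ex_intro _ s (conj Ss erefl))).
by apply/quot_ass_r_ass_l/fker; rewrite -[f _]/((f \o pir) x) -gphi phix rmorph0.
Qed.

Lemma quot_ass_r_in_Den_l' (a : subs R) :
  (forall x, a x <-> ass_lr S x) -> in_Den_l' (image_of pir S) (image_of pir a).
Proof.
move=> aE; split.
  exact: lC_left_denom quot_ass_r_mult_set (image_left_ore pir_surj SL) quot_ass_r_lC.
split=> [y | ]; last exact: quot_ass_r_lC.
have [x <-] := pir_surj y; split=> [/quot_ass_r_ass_l/aE ax | [x' [/aE ax' <-]]]; first by exists x.
exact/quot_ass_r_ass_l.
Qed.

Lemma quot_ass_r_left_fractions_univ_loc (Qr : pzRingType) (sr : {rmorphism Rr -> Qr}) :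
  is_left_fractions (image_of pir S) sr -> is_univ_loc S (sr \o pir).
Proof.
move=> [srS [srfrac srker]]; apply: left_fractions_univ_loc => //.
- exact: proj1 Smult.
- by move=> s Ss; apply: srS; exists s.
- move=> q; have [_ [y [[s [Ss <-]] [u [_ [su ->]]]]]] := srfrac q.
  by have [r <-] := pir_surj y; exists s, r; split=> //=; rewrite mulrA su mul1r.
- by move=> x /srker /quot_ass_r_ass_l.
Qed.

End QuotientByAssR.

Section QuotientByAssL.
Variables (R Rl : pzRingType) (S : subs R) (pil : {rmorphism R -> Rl}).
Hypotheses (Smult : mult_set S) (SR : right_ore S) (pil_surj : forall y, exists r, pil r = y)
  (pil_ker : forall r, pil r = 0 <-> ass_l S r).

Let SM : forall a b, S a -> S b -> S (a * b) := proj2 (proj2 Smult).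

Lemma quot_ass_l_rC t : image_of pil S t -> rC t.
Proof.
case=> s [Ss <-] y; have [x <-] := pil_surj y.
rewrite -rmorphM => /pil_ker [s' [Ss' s'sx]]; apply/pil_ker.
by exists (s' * s); rewrite -mulrA; split=> //; apply: SM.
Qed.

Lemma quot_ass_l_mult_set : mult_set (image_of pil S).
Proof.
apply: image_mult_set => // s Ss /pil_ker [s' [Ss' s's]].
by case: Smult => [_ [S0 _]]; apply: S0; rewrite -s's; apply: SM.
Qed.

Lemma quot_ass_l_ass_r x : ass_r (image_of pil S) (pil x) <-> ass_lr S x.
Proof.
split=> [[_ [[s [Ss <-]]]] | [s [s' [Ss Ss' sxs]]]].
  by rewrite -rmorphM => /pil_ker [s' [Ss' sxs']]; exists s, s'; rewrite -mulrA.
by exists (pil s); split; [exists s | rewrite -rmorphM; apply/pil_ker; exists s'; rewrite mulrA].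
Qed.

Lemma quot_ass_l_in_Den_r' (a : subs R) :
  (forall x, a x <-> ass_lr S x) -> in_Den_r' (image_of pil S) (image_of pil a).
Proof.
move=> aE; split.
  exact: rC_right_denom quot_ass_l_mult_set (image_right_ore pil_surj SR) quot_ass_l_rC.
split=> [y | ]; last exact: quot_ass_l_rC.
have [x <-] := pil_surj y; split=> [/quot_ass_l_ass_r/aE ax | [x' [/aE ax' <-]]]; first by exists x.
exact/quot_ass_l_ass_r.
Qed.

Lemma quot_ass_l_right_fractions_univ_loc (Ql : pzRingType) (sl : {rmorphism Rl -> Ql}) :
  is_right_fractions (image_of pil S) sl -> is_univ_loc S (sl \o pil).
Proof.
move=> [slS [slfrac slker]]; apply: right_fractions_univ_loc => //.
- exact: proj1 Smult.
- by move=> s Ss; apply: slS; exists s.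
- move=> q; have [_ [y [[s [Ss <-]] [u [us [_ ->]]]]]] := slfrac q.
  by have [r <-] := pil_surj y; exists s, r; split=> //=; rewrite -mulrA us mulr1.
- by move=> x /slker /quot_ass_l_ass_r.
Qed.

End QuotientByAssL.

Section LeastIdeals.
Variables (R : pzRingType) (S : subs R).
Hypotheses (Smult : mult_set S) (SL : left_ore S) (SR : right_ore S).

Let SM : forall a b, S a -> S b -> S (a * b) := proj2 (proj2 Smult).

Lemma ass_r_ideal : is_ideal (ass_r S).
Proof.
split; first by exists 1; rewrite mul0r; split=> //; apply: (proj1 Smult).
split=> [x y [s1 [Ss1 xs1]] [s2 [Ss2 ys2]] | ].
  have [c [d [Sc s1cd]]] := SR s1 Ss2; exists (s1 * c); split; first exact: SM.
  by rewrite mulrBl mulrA xs1 mul0r s1cd mulrA ys2 mul0r subrr.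
split=> r x [s [Ss xs]]; first by exists s; rewrite -mulrA xs mulr0.
by have [c [d [Sc rcsd]]] := SR r Ss; exists c; split=> //; rewrite -mulrA rcsd mulrA xs mul0r.
Qed.

Lemma ass_l_ideal : is_ideal (ass_l S).
Proof.
split; first by exists 1; rewrite mulr0; split=> //; apply: (proj1 Smult).
split=> [x y [s1 [Ss1 s1x]] [s2 [Ss2 s2y]] | ].
  have [c [d [Sc cs1d]]] := SL s1 Ss2; exists (c * s1); split; first exact: SM.
  by rewrite mulrBr -mulrA s1x mulr0 cs1d -mulrA s2y mulr0 subrr.
split=> r x [s [Ss sx]]; last by exists s; rewrite mulrA sx mul0r.
by have [c [d [Sc crds]]] := SL r Ss; exists c; split=> //; rewrite mulrA crds -mulrA sx mulr0.
Qed.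

Lemma ass_r_least_lC_mod : least_ideal (S_in_lC_mod S) (ass_r S).
Proof.
split; first exact: ass_r_ideal.
split=> [s x Ss [s' [Ss' xss']] | b [b0 _] bS x [s [Ss xs]]].
  by exists (s * s'); rewrite mulrA; split=> //; apply: SM.
by apply: (bS s x Ss); rewrite xs.
Qed.

Lemma ass_l_least_rC_mod : least_ideal (S_in_rC_mod S) (ass_l S).
Proof.
split; first exact: ass_l_ideal.
split=> [s x Ss [s' [Ss' s'sx]] | b [b0 _] bS x [s [Ss sx]]].
  by exists (s' * s); rewrite -mulrA; split=> //; apply: SM.
by apply: (bS s x Ss); rewrite sx.
Qed.

End LeastIdeals.

Unset Implicit Arguments.

Theorem corollary1p7
  (R : pzRingType) (S : subs R) (hS : ore_set S)
  (* S^{-1}R = RS^{-1} = R<S^{-1}>, with natural map phi; a = ass_R(S) = ker phi *)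
  (L : pzRingType) (phi : {rmorphism R -> L}) (hL : is_univ_loc S phi)
  (* R_l = R / ass_l(S) with natural map pil *)
  (Rl : pzRingType) (pil : {rmorphism R -> Rl}) (pil_surj : forall y : Rl, exists r, pil r = y)
  (pil_ker : forall r, pil r = 0 <-> ass_l S r)
  (* R_r = R / ass_r(S) with natural map pir *)
  (Rr : pzRingType) (pir : {rmorphism R -> Rr}) (pir_surj : forall y : Rr, exists r, pir r = y)
  (pir_ker : forall r, pir r = 0 <-> ass_r S r) :
  let a : subs R := fun r => phi r = 0 in
  (* 1 *)
  (forall x y, ass_l S x -> ass_r S y -> a (x + y)) /\
  (* 2 *)
  (in_Den_r' (image_of pil S) (image_of pil a) /\
   forall (Ql : pzRingType) (sl : {rmorphism Rl -> Ql}),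
     is_right_fractions (image_of pil S) sl ->
     R_iso phi (fun r => sl (pil r))) /\
  (* 3 *)
  (in_Den_l' (image_of pir S) (image_of pir a) /\
   forall (Qr : pzRingType) (sr : {rmorphism Rr -> Qr}),
     is_left_fractions (image_of pir S) sr ->
     R_iso phi (fun r => sr (pir r)) /\
     forall (Ql : pzRingType) (sl : {rmorphism Rl -> Ql}),
       is_right_fractions (image_of pil S) sl ->
       R_iso (fun r => sr (pir r)) (fun r => sl (pil r))) /\
  (* 4 *)
  (least_ideal (S_in_lC_mod S) (ass_r S) /\ least_ideal (S_in_rC_mod S) (ass_l S)).
Proof.
move=> a; have [Smult [SL SR]] := hS; have S1 : S 1 := proj1 Smult.
have aE x : a x <-> ass_lr S x.
  split; first exact: (univ_loc_ker_ass_lr Smult SL pir_surj pir_ker hL).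
  exact: (inverts_ass_lr_eq0 (proj1 hL)).
have ULl (Ql : pzRingType) (sl : {rmorphism Rl -> Ql}) :
    is_right_fractions (image_of pil S) sl -> is_univ_loc S (sl \o pil).
  exact: (quot_ass_l_right_fractions_univ_loc Smult SR pil_surj pil_ker).
have ULr (Qr : pzRingType) (sr : {rmorphism Rr -> Qr}) :
    is_left_fractions (image_of pir S) sr -> is_univ_loc S (sr \o pir).
  exact: (quot_ass_r_left_fractions_univ_loc Smult SL pir_surj pir_ker).
split; [|split; [|split]].
- move=> x y /(ass_l_sub_ass_lr S1)/aE ax /(ass_r_sub_ass_lr S1)/aE ay.
  by rewrite /a rmorphD ax ay addr0.
- split; first exact: (quot_ass_l_in_Den_r' Smult SR pil_surj pil_ker).
  by move=> Ql sl /ULl URl; exact: (univ_loc_R_iso hL URl).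
- split; first exact: (quot_ass_r_in_Den_l' Smult SL pir_surj pir_ker).
  move=> Qr sr /ULr URr; split; first exact: (univ_loc_R_iso hL URr).
  by move=> Ql sl /ULl URl; exact: (univ_loc_R_iso URr URl).
- by split; [apply: ass_r_least_lC_mod | apply: ass_l_least_rC_mod].
Qed.
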